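(* Consider the half-duplex (HD) single-stage relay selection (SRS) scheme described in the context with $K\ge1$ relays, with $\varpi=0$, thresholds $\gamma_{th_j}=2^{2R_{D_j}}-1$ for $j=1,2$, and power coefficients satisfying $0<a_1<a_2$, $a_1+a_2=1$, $a_2>a_1\gamma_{th_2}$. Then its diversity order equals the number of relays: $$-\lim_{\rho\to\infty}\frac{\log P_{SRS}^{HD}(\rho)}{\log\rho}=K .$$
   Context: Network model. A base station (BS) is at the origin of the plane. There are $K\ge 1$ relays $R_1,\dots,R_K$ whose positions are i.i.d. uniformly distributed in the disc of radius $R_{\mathcal D}>0$ centred at the origin; $d_{SR_i}$ is the distance from the BS to $R_i$. Two users $D_1,D_2$ are at fixed points of the plane at distances $d_1,d_2>0$ from the BS, and $d_{R_iD_j}$ is the Euclidean distance between $R_i$ and $D_j$. Let $\alpha>0$ be the path loss exponent. The random variables $g_{SR_i}$, $g_{R_iD_1}$, $g_{R_iD_2}$ ($i=1,\dots,K$) are exponentially distributed with mean $1$ (squared magnitudes of $\mathcal{CN}(0,1)$ Rayleigh coefficients), $Z_i$ is exponentially distributed with mean $\Omega_{LI}>0$, and all of these are mutually independent and independent of the relay positions. Put $X_i=g_{SR_i}/(1+d_{SR_i}^\alpha)$ and $Y_{ji}=g_{R_iD_j}/(1+d_{R_iD_j}^\alpha)$. Let $\rho>0$ be the transmit SNR, $a_1,a_2$ power allocation coefficients, and $\varpi\in\{0,1\}$ the duplex factor. Define $\gamma_{D_2\to R_i}=\frac{\rho X_i a_2}{\rho X_i a_1+\rho\varpi Z_i+1}$,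 $\gamma^{(i)}_{D_2\to D_1}=\frac{\rho Y_{1i}a_2}{\rho Y_{1i}a_1+1}$, $\gamma^{(i)}_{D_2}=\frac{\rho Y_{2i}a_2}{\rho Y_{2i}a_1+1}$. Target rates $R_{D_1},R_{D_2}>0$ are given; in HD mode $\varpi=0$ and $\gamma_{th_j}=2^{2R_{D_j}}-1$. SRS scheme: with $W_i=\min\{\gamma_{D_2\to R_i},\gamma^{(i)}_{D_2\to D_1},\gamma^{(i)}_{D_2}\}$, the outage probability is $P_{SRS}(\rho)=\Pr(\max_{1\le i\le K}W_i<\gamma_{th_2})$; $P_{SRS}^{HD}$ denotes it in HD mode. *)

From HB Require Import structures.
From mathcomp Require Import all_boot all_order all_algebra.
From mathcomp Require Import all_classical all_reals all_analysis.
Set Implicit Arguments. Unset Strict Implicit. Unset Printing Implicit Defensive.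
Import Order.TTheory GRing.Theory Num.Theory.
Import numFieldNormedType.Exports.
Local Open Scope classical_set_scope.
Local Open Scope ring_scope.

Definition gen_events {dT d' : measure_display} {T : measurableType dT}
  {T' : measurableType d'} (X : T -> T') : set (set T) :=
  [set X @^-1` B | B in [set B : set T' | measurable B]].

Definition mutually_independent {R : realType} {d : measure_display}
  {T : measurableType d} (P : probability T R) {I : finType}
  (F : I -> set (set T)) : Prop :=
  forall (S : {set I}) (A : I -> set T),
    (forall i, i \in S -> F i (A i)) ->
    P (\bigcap_(i in [set` S]) A i) = (\prod_(i in S) P (A i))%E.

Definition dist2 {R : realType} (p q : R * R) : R :=
  Num.sqrt ((p.1 - q.1) ^+ 2 + (p.2 - q.2) ^+ 2).

Definition disc {R : realType} (r : R) : set (R * R) :=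
  [set p | p.1 ^+ 2 + p.2 ^+ 2 <= r ^+ 2].

Definition uniform_in_disc {R : realType} {d : measure_display}
  {T : measurableType d} (P : probability T R) (r : R) (X : T -> R * R) : Prop :=
  forall A : set (R * R), measurable A ->
    P (X @^-1` A) =
    ((@lebesgue_measure R \x @lebesgue_measure R) (A `&` disc r)
       * ((pi * r ^+ 2)^-1)%:E)%E.

Definition exponential_mean {R : realType} {d : measure_display}
  {T : measurableType d} (P : probability T R) (m : R) (X : T -> R) : Prop :=
  forall A : set R, measurable A -> P (X @^-1` A) = exponential_prob (m^-1) A.

(* large-scale fading normalisation  g / (1 + dist^alpha) *)
Definition chan {R : realType} (alpha g dst : R) : R := g / (1 + dst `^ alpha).

Definition sinr {R : realType} (rho a1 a2 varpi V Z : R) : R :=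
  rho * V * a2 / (rho * V * a1 + rho * varpi * Z + 1).

(* W_i = min { gamma_{D2->R_i}, gamma^{(i)}_{D2->D1}, gamma^{(i)}_{D2} } *)
Definition W_SRS {R : realType} (rho a1 a2 varpi alpha : R) (D1 D2 : R * R)
  (pos : R * R) (gSR g1 g2 z : R) : R :=
  Num.min (sinr rho a1 a2 varpi (chan alpha gSR (dist2 pos (0, 0))) z)
   (Num.min (sinr rho a1 a2 0 (chan alpha g1 (dist2 pos D1)) 0)
            (sinr rho a1 a2 0 (chan alpha g2 (dist2 pos D2)) 0)).

(* outage probability of the SRS scheme:
   Pr( max_{1<=i<=K} W_i < gamma_th2 )  (all W_i >= 0, so 0 is a neutral seed) *)
Definition P_SRS {R : realType} {d : measure_display} {T : measurableType d}
  (P : probability T R) (K : nat) (pos : 'I_K -> T -> R * R)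
  (gSR g1 g2 Z : 'I_K -> T -> R) (a1 a2 varpi alpha gth2 : R) (D1 D2 : R * R)
  (rho : R) : R :=
  fine (P [set t | \big[Num.max/0]_(i < K)
             W_SRS rho a1 a2 varpi alpha D1 D2 (pos i t) (gSR i t) (g1 i t)
                   (g2 i t) (Z i t) < gth2]).

(* The outage event is squeezed between two events built from K independent
   per-relay events.  From below: if every source-relay gain is at most
   th / (2 rho), with th = gth2 / (a2 - a1 gth2), every relay already fails on
   its first hop; this has probability (1 - exp (- th / (2 rho)))^K, at least
   (th / (4 rho))^K.  From above: a relay inside the disc whose three gains are
   all at least c th / rho, where c bounds 1 + d^alpha over all possible link
   lengths d, has W_i >= gth2.  So in an outage every relay lies outside the
   disc (probability 0) or has an exponential gain below c th / rho
   (probability at most c th / rho); expanding the intersection of these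
   unions and using independence gives an upper bound (5 c th / rho)^K.
   Hence ln P_out = - K ln rho + O(1). *)

From HB Require Import structures.
From mathcomp Require Import all_boot all_order all_algebra.
From mathcomp Require Import all_classical all_reals all_analysis.
From mathcomp Require Import measurable_realfun ring lra.
Import Order.TTheory GRing.Theory Num.Theory.
Import numFieldNormedType.Exports.
Local Open Scope classical_set_scope.
Local Open Scope ring_scope.

Section measurability.
Context {R : realType} {d : measure_display} {T : measurableType d}.

Lemma measurable_invr : measurable_fun [set: R] (@GRing.inv R).
Proof.
have -> : @GRing.inv R = (fun x => if x == 0 then 0 else x^-1).
  by apply/funext => x; case: eqP => // ->; rewrite invr0.
apply: measurable_fun_if => //; first exact: measurable_fun_eqr.
rewrite setTI.
have -> : (fun x : R => x == 0) @^-1` [set false] = [set x | x != 0].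
  by apply/seteqP; split => x /=; case: eqP.
apply: open_continuous_measurable_fun; first exact: open_neq.
by move=> x; rewrite inE /= => x0; exact: inv_continuous.
Qed.

Lemma measurable_dist2 (p : T -> R * R) (q : R * R) : measurable_fun setT p ->
  measurable_fun setT (fun t => dist2 (p t) q).
Proof.
move=> mp; apply: (measurableT_comp (continuous_measurable_fun (@sqrt_continuous R))).
apply: measurable_funD; apply: measurable_funX; apply: measurable_funB => //.
- exact: measurableT_comp measurable_fst mp.
- exact: measurableT_comp measurable_snd mp.
Qed.

Lemma measurable_chan (alpha : R) (g dst : T -> R) : measurable_fun setT g ->
  measurable_fun setT dst -> measurable_fun setT (fun t => chan alpha (g t) (dst t)).
Proof.
move=> mg md; apply: measurable_funM => //.
apply: measurableT_comp measurable_invr _; apply: measurable_funD => //.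
exact: measurableT_comp (measurable_powR alpha) md.
Qed.

Lemma measurable_sinr (rho a1 a2 varpi : R) (V Z : T -> R) :
  measurable_fun setT V -> measurable_fun setT Z ->
  measurable_fun setT (fun t => sinr rho a1 a2 varpi (V t) (Z t)).
Proof.
move=> mV mZ; apply: measurable_funM.
  by apply: measurable_funM => //; apply: measurable_funM.
apply: measurableT_comp measurable_invr _.
by apply: measurable_funD => //; apply: measurable_funD; apply: measurable_funM => //;
  apply: measurable_funM.
Qed.

Lemma measurable_W_SRS (rho a1 a2 varpi alpha : R) (D1 D2 : R * R)
    (p : T -> R * R) (gs g1 g2 z : T -> R) :
  measurable_fun setT p -> measurable_fun setT gs -> measurable_fun setT g1 ->
  measurable_fun setT g2 -> measurable_fun setT z ->
  measurable_fun setT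
    (fun t => W_SRS rho a1 a2 varpi alpha D1 D2 (p t) (gs t) (g1 t) (g2 t) (z t)).
Proof.
move=> mp ms m1 m2 mz.
have mlink vp q g zz : measurable_fun setT g -> measurable_fun setT zz ->
    measurable_fun setT
      (fun t => sinr rho a1 a2 vp (chan alpha (g t) (dist2 (p t) q)) (zz t)).
  move=> mg mzz; apply: measurable_sinr mzz.
  exact: measurable_chan mg (measurable_dist2 _ _ mp).
apply: measurable_minr; last apply: measurable_minr; apply: mlink => //;
  exact: measurable_cst.
Qed.

Lemma measurable_bigmaxr (I : Type) (s : seq I) (F : I -> T -> R) :
  (forall i, measurable_fun setT (F i)) ->
  measurable_fun setT (fun t => \big[Num.max/0]_(i <- s) F i t).
Proof.
move=> mF; elim: s => [|x s IH].
  by under eq_fun do rewrite big_nil; exact: measurable_cst.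
by under eq_fun do rewrite big_cons; exact: measurable_maxr.
Qed.

Lemma measurable_disc (r : R) : measurable (disc r).
Proof.
have mf : measurable_fun setT (fun p : R * R => p.1 ^+ 2 + p.2 ^+ 2).
  by apply: measurable_funD; apply: measurable_funX;
    [exact: measurable_fst | exact: measurable_snd].
have -> : disc r = setT `&` (fun p : R * R => p.1 ^+ 2 + p.2 ^+ 2) @^-1` `]-oo, r ^+ 2].
  by rewrite setTI; apply/seteqP; split => x /=; rewrite in_itv.
exact: mf measurableT _ (measurable_itv _).
Qed.

End measurability.

Section real_inequalities.
Context {R : realType}.

Lemma powR_gt1 (a x : R) : 1 < a -> 0 < x -> 1 < a `^ x.
Proof.
move=> a1 x0; have -> : 1 = 1 `^ x :> R by rewrite powR1.
by rewrite gt0_ltr_powR ?nnegrE // ltW // (lt_trans ltr01).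
Qed.

Lemma dist2_le_disc (r N : R) (p q : R * R) : disc r p ->
  q.1 ^+ 2 + q.2 ^+ 2 <= N -> dist2 p q <= Num.sqrt (2 * r ^+ 2 + 2 * N).
Proof.
rewrite /disc /= => hp hq; rewrite /dist2 ler_sqrt; last first.
  by rewrite addr_ge0 // mulr_ge0 // ?sqr_ge0 // (le_trans _ hq) // addr_ge0 ?sqr_ge0.
have sqrB_le (x y : R) : (x - y) ^+ 2 <= 2 * x ^+ 2 + 2 * y ^+ 2.
  by have := sqr_ge0 (x + y); rewrite sqrrD sqrrB; lra.
have := sqrB_le p.1 q.1; have := sqrB_le p.2 q.2; lra.
Qed.

Lemma half_le_1_sub_expRN (s : R) : 0 <= s <= 1 -> s / 2 <= 1 - expR (- s).
Proof.
move=> /andP[s0 s1].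
have e0 : 0 < expR (- s) by rewrite expR_gt0.
have es : expR (- s) * (1 + s) <= 1.
  by have := ler_wpM2l (ltW e0) (expR_ge1Dx s); rewrite -expRD addNr expR0.
nra.
Qed.

End real_inequalities.

Section link_budget.
Context {R : realType}.

Lemma chan_ge0 (alpha g dst : R) : 0 <= g -> 0 <= chan alpha g dst.
Proof. by move=> g0; rewrite divr_ge0 // addr_ge0 // powR_ge0. Qed.

Lemma chan_le (alpha g dst : R) : 0 <= g -> chan alpha g dst <= g.
Proof.
move=> g0; rewrite ler_pdivrMr ?ler_peMr //; last by rewrite ltr_pwDl // powR_ge0.
by rewrite lerDl powR_ge0.
Qed.

Lemma chan_ge (alpha g dst B : R) : 0 <= alpha -> 0 <= dst <= B -> 0 <= g ->
  g / (1 + B `^ alpha) <= chan alpha g dst.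
Proof.
move=> alpha0 /andP[dst0 dstB] g0.
rewrite /chan ler_wpM2l // lef_pV2 ?posrE ?ltr_pwDl ?powR_ge0 //.
by rewrite lerD2l ge0_ler_powR // nnegrE // (le_trans dst0).
Qed.

Lemma sinr0_ltE (rho a1 a2 g V Z : R) : 0 <= a1 -> a1 * g < a2 -> 0 <= rho * V ->
  (sinr rho a1 a2 0 V Z < g) = (rho * V < g / (a2 - a1 * g)).
Proof.
move=> a1_ge0 a1g rhoV0.
rewrite /sinr mulr0 mul0r addr0 ltr_pdivrMr; last first.
  by rewrite ltr_pwDr // mulr_ge0.
rewrite ltr_pdivlMr ?subr_gt0 //; apply/idP/idP => h; lra.
Qed.

End link_budget.

Section exponential_tail.
Context {R : realType}.

Lemma exponential_prob_lt_le (rate u : R) : 0 <= rate -> 0 < u ->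
  (exponential_prob rate `]-oo, u[ <= (rate * u)%:E)%E.
Proof.
move=> rate0 u0.
have pdf_ge0 x : (0 <= (exponential_pdf rate x)%:E)%E.
  by rewrite lee_fin exponential_pdf_ge0.
have mpdf D : measurable_fun D (EFin \o exponential_pdf rate).
  by apply/measurable_funTS/measurableT_comp => //; exact: measurable_exponential_pdf.
have disj : [disjoint `]-oo, 0[%classic & `[0, u]%classic].
  rewrite disj_set2E; apply/eqP/seteqP; split => // x [] /=.
  by rewrite !in_itv /= => x0 /andP[/(lt_le_trans x0)]; rewrite ltxx.
apply: (@le_trans _ _ (\int[lebesgue_measure]_(x in `]-oo, 0%R[ `|` `[0%R, u])
                         (exponential_pdf rate x)%:E)%E).
  apply: ge0_subset_integral => //; [exact: measurableU | exact: mpdf |].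
  by move=> x /=; rewrite !in_itv /=; case: (ltP x 0) => x0 xu; [left | right; rewrite ltW].
rewrite ge0_integral_setU //=; last exact: mpdf.
rewrite [X in (X + _)%E]integral0_eq ?add0e -/(exponential_prob rate _); last first.
  by move=> x; rewrite /= in_itv /= => x0; rewrite lt0_exponential_pdf.
rewrite exponential_prob_itv0c // lee_fin.
by have := expR_ge1Dx (- rate * u); lra.
Qed.

End exponential_tail.

Lemma fsbig_setT (R : Type) (idx : R) (op : Monoid.com_law idx) (I : finType)
    (F : I -> R) :
  \big[op/idx]_(i \in [set: I]) F i = \big[op/idx]_(i : I) F i.
Proof.
rewrite (fsbigE (index_enum I)) ?index_enum_uniq //; last first.
  by move=> i _; rewrite mem_index_enum.
by apply: eq_bigl => i; rewrite in_setT.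
Qed.

Section random_variables.
Context {R : realType} {d : measure_display} {T : measurableType d}.
Variable P : probability T R.

Lemma exponential_mean1E (X : {RV P >-> R}) (A : set R) :
  exponential_mean P 1 X -> measurable A -> P (X @^-1` A) = exponential_prob 1 A.
Proof. by move=> HX mA; rewrite HX // invr1. Qed.

Lemma mutually_independent_bigcap {I J : finType} {F : I * J -> set (set T)}
    {k : I -> J} {A : I -> set T} :
  mutually_independent P F -> (forall i, F (i, k i) (A i)) ->
  P (\bigcap_i A i) = (\prod_i P (A i))%E.
Proof.
move=> indep FA.
have := indep [set (i, k i) | i : I] (fun ik => A ik.1).
have -> : \bigcap_(ik in [set` [set (i, k i) | i : I]]) A ik.1 = \bigcap_i A i.
  apply/seteqP; split => t At i Si.
    by apply: (At (i, k i)); apply/imsetP; exists i.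
  by case/imsetP: Si => j _ ->; exact: At.
rewrite big_imset /=; last by move=> i j _ _ [].
by apply; move=> _ /imsetP[i _ ->]; exact: FA.
Qed.

End random_variables.

Section diversity_order.
Context {R : realType}.

Lemma ln_sandwich_expn {K : nat} {c1 c2 rho x : R} : 0 < c1 -> 0 < c2 -> 0 < rho ->
  (c1 / rho) ^+ K <= x <= (c2 / rho) ^+ K ->
  ln c1 *+ K <= ln x + ln rho *+ K <= ln c2 *+ K.
Proof.
move=> c1_gt0 c2_gt0 rho_gt0 /andP[lo hi].
have lnE c : 0 < c -> ln ((c / rho) ^+ K) = ln c *+ K - ln rho *+ K.
  by move=> c0; rewrite lnXn ?divr_gt0 // lnM ?posrE ?invr_gt0 // lnV ?posrE // mulrnBl.
have c1K_gt0 : 0 < (c1 / rho) ^+ K by rewrite exprn_gt0 ?divr_gt0.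
have x_gt0 : 0 < x := lt_le_trans c1K_gt0 lo.
have := lo; rewrite -ler_ln ?posrE // lnE // => lo'.
have := hi; rewrite -ler_ln ?posrE ?exprn_gt0 ?divr_gt0 // lnE // => hi'.
apply/andP; split; lra.
Qed.

Lemma cvg_diversity_order (K : nat) (p : R -> R) (M : R) :
  (\forall rho \near +oo, `|ln (p rho) + ln rho *+ K| <= M) ->
  - ln (p rho) / ln rho @[rho --> +oo] --> (K%:R : R).
Proof.
move=> bounded; apply/cvgrPdist_lt => e e0.
near=> rho.
have rho_gt1 : 1 < rho by near: rho; apply: nbhs_pinfty_gt; rewrite num_real.
have rho_big : expR (M / e) < rho by near: rho; apply: nbhs_pinfty_gt; rewrite num_real.
have rho_gt0 : 0 < rho := lt_trans ltr01 rho_gt1.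
have lnrho_gt0 : 0 < ln rho by rewrite ln_gt0.
rewrite (_ : _ - _ = (ln (p rho) + ln rho *+ K) / ln rho); last first.
  by rewrite -mulr_natr; field; rewrite gt_eqF.
rewrite normrM normfV (gtr0_norm lnrho_gt0) ltr_pdivrMr //.
apply: (@le_lt_trans _ _ M); first by near: rho.
by rewrite mulrC -ltr_pdivrMr // -ltr_expR lnK ?posrE.
Unshelve. all: by end_near.
Qed.

Lemma diversity_order_sandwich (K : nat) (p : R -> R) (c1 c2 r0 : R) :
  0 < c1 -> 0 < c2 ->
  (forall rho, r0 < rho -> (c1 / rho) ^+ K <= p rho <= (c2 / rho) ^+ K) ->
  - ln (p rho) / ln rho @[rho --> +oo] --> (K%:R : R).
Proof.
move=> c1_gt0 c2_gt0 bounds.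
apply: (@cvg_diversity_order _ _ (`|ln c1 *+ K| + `|ln c2 *+ K|)).
near=> rho.
have rho_gt0 : 0 < rho by near: rho; apply: nbhs_pinfty_gt; rewrite num_real.
have rho_gt_r0 : r0 < rho by near: rho; apply: nbhs_pinfty_gt; rewrite num_real.
have /andP[lo hi] := ln_sandwich_expn c1_gt0 c2_gt0 rho_gt0 (bounds rho rho_gt_r0).
have := ler_norm (- (ln c1 *+ K)); have := ler_norm (ln c2 *+ K).
rewrite normrN ler_norml; have := normr_ge0 (ln c1 *+ K); have := normr_ge0 (ln c2 *+ K).
move=> *; apply/andP; split; lra.
Unshelve. all: by end_near.
Qed.

End diversity_order.

Section srs_outage.
Context {R : realType} {d : measure_display} {T : measurableType d}.
Context {P : probability T R} {K : nat}.
Context {pos : 'I_K -> {RV P >-> (R * R)%type}} {gSR g1 g2 Z : 'I_K -> {RV P >-> R}}.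
Context {RDisc alpha a1 a2 gth : R} {D1 D2 : R * R}.

Hypothesis alpha_ge0 : 0 <= alpha.
Hypothesis a1_ge0 : 0 <= a1.
Hypothesis gth_gt0 : 0 < gth.
Hypothesis a1gth_lt_a2 : a1 * gth < a2.
Hypothesis pos_uniform : forall i, uniform_in_disc P RDisc (pos i).
Hypothesis gSR_exponential : forall i, exponential_mean P 1 (gSR i).
Hypothesis g1_exponential : forall i, exponential_mean P 1 (g1 i).
Hypothesis g2_exponential : forall i, exponential_mean P 1 (g2 i).

Definition relay_events (ik : 'I_K * 'I_5) : set (set T) :=
  match val ik.2 with
  | 0 => gen_events (pos ik.1)
  | 1 => gen_events (gSR ik.1)
  | 2 => gen_events (g1 ik.1)
  | 3 => gen_events (g2 ik.1)
  | _ => gen_events (Z ik.1)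
  end.

Hypothesis relays_independent : mutually_independent P relay_events.

Definition W_relay rho i t :=
  W_SRS rho a1 a2 0 alpha D1 D2 (pos i t) (gSR i t) (g1 i t) (g2 i t) (Z i t).

Definition srs_outage rho := [set t | \big[Num.max/0]_(i < K) W_relay rho i t < gth].

Lemma srs_outageE rho t : srs_outage rho t <-> forall i, W_relay rho i t < gth.
Proof.
rewrite /srs_outage /=; split => [/bigmax_ltP[_ WK] i|WK]; first exact: WK.
by apply/bigmax_ltP; split => // i _; exact: WK.
Qed.

Lemma measurable_srs_outage rho : measurable (srs_outage rho).
Proof.
have mW : measurable_fun setT (fun t => \big[Num.max/0]_(i < K) W_relay rho i t).
  by apply: measurable_bigmaxr => i; apply: measurable_W_SRS; exact: measurable_funPT.
have -> : srs_outage rho =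
    setT `&` (fun t => \big[Num.max/0]_(i < K) W_relay rho i t) @^-1` `]-oo, gth[.
  by rewrite setTI; apply/seteqP; split => t /=; rewrite in_itv.
exact: mW measurableT _ (measurable_itv _).
Qed.

Let th := gth / (a2 - a1 * gth).

Let th_gt0 : 0 < th.
Proof. by rewrite divr_gt0 ?subr_gt0. Qed.

Lemma W_lt_of_gSR_le rho i t : 0 < rho -> 0 <= gSR i t <= th / (2 * rho) ->
  W_relay rho i t < gth.
Proof.
move=> rho_gt0 /andP[g_ge0 g_le].
have rhoV_ge0 := mulr_ge0 (ltW rho_gt0) (chan_ge0 alpha _ (dist2 (pos i t) (0, 0)) g_ge0).
rewrite /W_relay /W_SRS gt_min sinr0_ltE //.
apply/orP; left; apply: (@le_lt_trans _ _ (rho * (th / (2 * rho)))).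
  by rewrite ler_pM2l // (le_trans (chan_le _ _ _ g_ge0)).
rewrite (_ : rho * _ = th / 2); last by field; rewrite gt_eqF.
by rewrite ltr_pdivrMr // ltr_pMr // ltr1n.
Qed.

Lemma P_srs_outage_ge rho : th < rho ->
  (th / 4 / rho) ^+ K <= fine (P (srs_outage rho)).
Proof.
move=> th_lt_rho; have rho_gt0 : 0 < rho := lt_trans th_gt0 th_lt_rho.
pose s := th / (2 * rho).
have s_gt0 : 0 < s by rewrite /s divr_gt0 // mulr_gt0.
have s_le1 : s <= 1.
  by rewrite /s ler_pdivrMr ?mulr_gt0 // mul1r; lra.
pose L := \bigcap_i gSR i @^-1` `[0, s].
have L_sub : L `<=` srs_outage rho.
  move=> t Lt; apply/srs_outageE => i.
  by apply: W_lt_of_gSR_le => //; have := Lt i I; rewrite /= in_itv.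
have PL : P L = ((1 - expR (- s)) ^+ K)%:E.
  rewrite (mutually_independent_bigcap P (k := fun=> Ordinal (isT : (1 < 5)%N))
    relays_independent); last first.
    by move=> i; exists `[0, s]%classic => //; exact: measurable_itv.
  under eq_bigr do rewrite exponential_mean1E // exponential_prob_itv0c // mulN1r.
  by rewrite prodEFin prodr_const card_ord.
have mL : measurable L.
  apply: fin_bigcap_measurable => // i _.
  by apply: measurable_funPTI; exact: measurable_itv.
have mO := measurable_srs_outage rho.
have PL_le : (P L <= P (srs_outage rho))%E by apply: le_measure; rewrite ?inE.
rewrite PL in PL_le.
apply: le_trans (fine_le _ (fin_num_measure P _ mO) PL_le) => //=.
have -> : th / 4 / rho = s / 2 by rewrite /s; field; rewrite gt_eqF.
have half_s_le : s / 2 <= 1 - expR (- s) by rewrite half_le_1_sub_expRN // ltW.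
have half_s_ge0 : 0 <= s / 2 by rewrite divr_ge0 // ltW.
by rewrite lerXn2r // nnegrE (le_trans half_s_ge0).
Qed.

(* [cB] bounds [1 + d ^ alpha] for every link of a relay inside the disc. *)
Let N := D1.1 ^+ 2 + D1.2 ^+ 2 + (D2.1 ^+ 2 + D2.2 ^+ 2).
Let cB := 1 + Num.sqrt (2 * RDisc ^+ 2 + 2 * N) `^ alpha.

Let cB_gt0 : 0 < cB.
Proof. by rewrite ltr_pwDl // powR_ge0. Qed.

Lemma sinr_link_ge rho p q g z : 0 < rho -> disc RDisc p ->
  q.1 ^+ 2 + q.2 ^+ 2 <= N -> cB * th / rho <= g ->
  gth <= sinr rho a1 a2 0 (chan alpha g (dist2 p q)) z.
Proof.
move=> rho_gt0 p_in q_le g_ge.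
have g_ge0 : 0 <= g by apply: le_trans g_ge; rewrite ltW // divr_gt0 // mulr_gt0.
have chan_lb : g / cB <= chan alpha g (dist2 p q).
  by apply: chan_ge => //; rewrite sqrtr_ge0 dist2_le_disc.
have rhoV_ge0 := mulr_ge0 (ltW rho_gt0) (chan_ge0 alpha _ (dist2 p q) g_ge0).
rewrite leNgt sinr0_ltE // -leNgt -/th.
apply: le_trans (ler_wpM2l (ltW rho_gt0) chan_lb).
have -> : th = rho * (cB * th / rho / cB) by field; rewrite !gt_eqF.
by rewrite ler_wpM2l ?(ltW rho_gt0) // ler_pM2r ?invr_gt0.
Qed.

(* Index [k] refers to the [k]-th class of [relay_events]; the class of [Z] is
   never bad. *)
Definition bad_event (u : R) (i : 'I_K) (k : 'I_5) : set T :=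
  match val k with
  | 0 => pos i @^-1` (~` disc RDisc)
  | 1 => gSR i @^-1` `]-oo, u[
  | 2 => g1 i @^-1` `]-oo, u[
  | 3 => g2 i @^-1` `]-oo, u[
  | _ => set0
  end.

Lemma bad_event_relay_events u i k : relay_events (i, k) (bad_event u i k).
Proof.
rewrite /relay_events /bad_event; case: k => [[|[|[|[|k]]]] hk] /=.
- by exists (~` disc RDisc) => //; exact: measurableC (measurable_disc _).
- by exists `]-oo, u[%classic => //; exact: measurable_itv.
- by exists `]-oo, u[%classic => //; exact: measurable_itv.
- by exists `]-oo, u[%classic => //; exact: measurable_itv.
- by exists set0 => //; exact: measurable0.
Qed.

Lemma measurable_bad_event u i k : measurable (bad_event u i k).
Proof.
rewrite /bad_event; case: (val k) => [|[|[|[|_]]]] //=;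
  apply: measurable_funPTI; first exact: measurableC (measurable_disc _).
all: exact: measurable_itv.
Qed.

Lemma P_bad_event_le u i k : 0 < u -> (P (bad_event u i k) <= u%:E)%E.
Proof.
move=> u_gt0.
have exp_lt_le (X : {RV P >-> R}) : exponential_mean P 1 X ->
    (P (X @^-1` `]-oo, u[) <= u%:E)%E.
  move=> HX; rewrite exponential_mean1E //.
  by have := exponential_prob_lt_le _ _ ler01 u_gt0; rewrite mul1r.
rewrite /bad_event; case: (val k) => [|[|[|[|_]]]] /=; try exact: exp_lt_le.
- rewrite pos_uniform; last exact: measurableC (measurable_disc _).
  by rewrite setICl measure0 mul0e lee_fin ltW.
- by rewrite measure0 lee_fin ltW.
Qed.

Lemma srs_outage_sub_bad rho : 0 < rho ->
  srs_outage rho `<=` \bigcup_(f in [set: {ffun 'I_K -> 'I_5}])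
                        \bigcap_i bad_event (cB * th / rho) i (f i).
Proof.
move=> rho_gt0 t /srs_outageE W_lt.
have sqr_le_N (q : R * R) : q \in [:: (0, 0); D1; D2] -> q.1 ^+ 2 + q.2 ^+ 2 <= N.
  have sqr_ge0 (x : R * R) : 0 <= x.1 ^+ 2 + x.2 ^+ 2 by rewrite addr_ge0 ?sqr_ge0.
  rewrite !inE => /or3P[|/eqP->|/eqP->]; last 2 first.
  - by rewrite lerDl sqr_ge0.
  - by rewrite lerDr sqr_ge0.
  by move/eqP->; rewrite /= expr0n addr0 addr_ge0 ?sqr_ge0.
have bad i : exists k, bad_event (cB * th / rho) i k t.
  apply: contrapT => no_bad.
  have good k : ~ bad_event (cB * th / rho) i k t by move=> ?; apply: no_bad; exists k.
  have in_disc : disc RDisc (pos i t).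
    by apply: contrapT; exact: (good (Ordinal (isT : (0 < 5)%N))).
  have gain_ge (X : {RV P >-> R}) (k : 'I_5) :
      bad_event (cB * th / rho) i k = X @^-1` `]-oo, cB * th / rho[ ->
      cB * th / rho <= X t.
    by move=> bk; have := good k; rewrite bk /= in_itv /= => /negP; rewrite -leNgt.
  have := W_lt i; apply/negP; rewrite -leNgt /W_relay /W_SRS !le_min.
  rewrite !sinr_link_ge ?sqr_le_N ?inE ?eqxx ?orbT //.
  - exact: (gain_ge (g2 i) (Ordinal (isT : (3 < 5)%N))).
  - exact: (gain_ge (g1 i) (Ordinal (isT : (2 < 5)%N))).
  - exact: (gain_ge (gSR i) (Ordinal (isT : (1 < 5)%N))).
have [f fP] := choice bad.
by exists [ffun i => f i] => // i _; rewrite ffunE.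
Qed.

Lemma P_bad_cover_le u : 0 < u ->
  (\sum_(f : {ffun 'I_K -> 'I_5}) P (\bigcap_i bad_event u i (f i)) <=
   ((5 * u) ^+ K)%:E)%E.
Proof.
move=> u_gt0.
pose q i k := fine (P (bad_event u i k)).
have Pq i k : P (bad_event u i k) = (q i k)%:E.
  by rewrite fineK // fin_num_measure //; exact: measurable_bad_event.
rewrite (eq_bigr (fun f : {ffun 'I_K -> 'I_5} => (\prod_i q i (f i))%:E)); last first.
  move=> f _; rewrite (mutually_independent_bigcap P relays_independent
    (fun i => bad_event_relay_events u i (f i))) -prodEFin.
  by apply: eq_bigr => i _; exact: Pq.
rewrite sumEFin lee_fin -bigA_distr_bigA /=.
apply: le_trans (_ : \prod_(i < K) (5 * u) <= _); last by rewrite prodr_const card_ord.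
apply: ler_prod => i _; apply/andP; split.
  by apply: sumr_ge0 => k _; rewrite fine_ge0 // measure_ge0.
apply: le_trans (_ : \sum_(k < 5) u <= _); last by rewrite sumr_const card_ord mulr_natl.
by apply: ler_sum => k _; rewrite -lee_fin -Pq P_bad_event_le.
Qed.

Lemma P_srs_outage_le rho : 0 < rho ->
  fine (P (srs_outage rho)) <= (5 * cB * th / rho) ^+ K.
Proof.
move=> rho_gt0; have u_gt0 : 0 < cB * th / rho by rewrite divr_gt0 // mulr_gt0.
have mbad (f : {ffun 'I_K -> 'I_5}) :
    measurable (\bigcap_i bad_event (cB * th / rho) i (f i)).
  apply: fin_bigcap_measurable => [|i _]; first exact: finite_finset.
  exact: measurable_bad_event.
have := content_sub_fsum P finite_finset (fun f _ => mbad f)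
  (measurable_srs_outage rho) (srs_outage_sub_bad rho rho_gt0).
rewrite fsbig_setT => /le_trans/(_ (P_bad_cover_le _ u_gt0)) P_le.
apply: le_trans (fine_le (fin_num_measure P _ (measurable_srs_outage rho)) _ P_le) _ => //=.
by rewrite !mulrA.
Qed.

Theorem srs_diversity_order :
  - ln (P_SRS P (fun i => pos i) (fun i => gSR i) (fun i => g1 i) (fun i => g2 i)
          (fun i => Z i) a1 a2 0 alpha gth D1 D2 rho) / ln rho
    @[rho --> +oo] --> (K%:R : R).
Proof.
apply: (@diversity_order_sandwich _ _ _ (th / 4) (5 * cB * th) th).
- by rewrite divr_gt0.
- by rewrite mulr_gt0 // mulr_gt0.
move=> rho th_lt_rho; rewrite -/(srs_outage rho) P_srs_outage_ge // P_srs_outage_le //.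
exact: lt_trans th_gt0 th_lt_rho.
Qed.

End srs_outage.

Theorem mainTheorem2 (R : realType) (d : measure_display) (T : measurableType d)
  (P : probability T R) (K : nat)
  (pos : 'I_K -> {RV P >-> (R * R)%type}) (gSR g1 g2 Z : 'I_K -> {RV P >-> R})
  (RDisc alpha OmegaLI a1 a2 RD1 RD2 : R) (D1 D2 : R * R) :
  (1 <= K)%N ->
  0 < RDisc -> 0 < alpha -> 0 < OmegaLI ->
  0 < dist2 D1 (0, 0) -> 0 < dist2 D2 (0, 0) ->
  0 < RD1 -> 0 < RD2 ->
  (forall i, uniform_in_disc P RDisc (pos i)) ->
  (forall i, exponential_mean P 1 (gSR i)) ->
  (forall i, exponential_mean P 1 (g1 i)) ->
  (forall i, exponential_mean P 1 (g2 i)) ->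
  (forall i, exponential_mean P OmegaLI (Z i)) ->
  mutually_independent P (fun ik : 'I_K * 'I_5 =>
    match val ik.2 with
    | 0 => gen_events (pos ik.1)
    | 1 => gen_events (gSR ik.1)
    | 2 => gen_events (g1 ik.1)
    | 3 => gen_events (g2 ik.1)
    | _ => gen_events (Z ik.1)
    end) ->
  let gth1 := 2 `^ (2 * RD1) - 1 in
  let gth2 := 2 `^ (2 * RD2) - 1 in
  0 < a1 -> a1 < a2 -> a1 + a2 = 1 -> a2 > a1 * gth2 ->
  (- ln (P_SRS P (fun i => pos i) (fun i => gSR i) (fun i => g1 i)
           (fun i => g2 i) (fun i => Z i) a1 a2 0 alpha gth2 D1 D2 rho)
     / ln rho) @[rho --> +oo] --> (K%:R : R).
Proof.
(* With [varpi = 0] the variables [Z] do not affect [W_SRS]. *)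
move=> _ _ alpha_gt0 _ _ _ _ RD2_gt0 pos_unif gSR_exp g1_exp g2_exp _ indep _ gth2
  a1_gt0 _ _ a1gth2_lt_a2.
have gth2_gt0 : 0 < gth2 by rewrite subr_gt0 powR_gt1 ?ltr1n // mulr_gt0.
apply: (srs_diversity_order (ltW alpha_gt0) (ltW a1_gt0) gth2_gt0 a1gth2_lt_a2
  pos_unif gSR_exp g1_exp g2_exp indep).
Qed.
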